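(* Let $f$ be any function of unitation on $\{0,1\}^n$, $\sigma=1$, $\kappa\in\mathbb{N}$ and $\mu\geq (n+1)\cdot\kappa$, and assume that the search points $0^n$ and $1^n$ are contained in the population of the $(\mu+1)$ EA with phenotypic clearing with clearing radius $\sigma$, niche capacity $\kappa$ and population size $\mu$ running on $f$. Then the expected time (number of generations) until all niches are found, i.e., until for every $i\in\{0,\dots,n\}$ the population contains a search point with exactly $i$ ones, is $O(\mu n)$.
   Context: A function of unitation is $f:\{0,1\}^n\to\mathbb{R}$ with $f(x)=u(|x|_1)$ for some $u:\{0,\dots,n\}\to\mathbb{R}^+$, where $|x|_1$ is the number of 1-bits of $x$; fitness values are assumed positive. Niche $i$ is the set of search points with exactly $i$ ones. The $(\mu+1)$ EA with clearing (population size $\mu$, clearing radius $\sigma$, niche capacity $\kappa$, distance function $\mathrm{d}$): $P_0$ consists of $\mu$ bit strings chosen independently and uniformly at random. In generation $t$: choose a parent $x\in P_t$ uniformly at random; create $y$ by flipping each bit of $x$ independently with probability $1/n$; let $P_t^*=P_t\cup\{y\}$; update the fitness values of $P_t^*$ by the clearing procedure: sort $P_t^*$ by decreasing fitness; for $i=1,\dots,|P_t^*|$, if the current fitness of $P[i]$ is positive, set $w:=1$ and for $j=i+1,\dots,|P_t^*|$: if the current fitness of $P[j]$ is positive and $\mathrm{d}(P[i],P[j])<\sigma$ then, if $w<\kappa$ set $w:=w+1$, else set the fitness of $P[j]$ to $0$. Individuals whose fitness is not reset are winners, the others are cleared. Then choose $z\in P_t$ with worst (cleared) fitness uniformly at random;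 if the (cleared) fitness of $y$ is at least that of $z$, set $P_{t+1}=P_t^*\setminus\{z\}$, otherwise $P_{t+1}=P_t^*\setminus\{y\}$. Phenotypic clearing uses $\mathrm{d}(x,y)=\big||x|_1-|y|_1\big|$. *)

From HB Require Import structures.
From mathcomp Require Import all_boot all_order all_algebra fingroup perm.
From mathcomp Require Import boolp classical_sets reals ereal topology normedtype sequences.
Set Implicit Arguments.
Unset Strict Implicit.
Unset Printing Implicit Defensive.
Import Order.TTheory GRing.Theory Num.Theory.
Local Open Scope ring_scope.

Definition bits (n : nat) := n.-tuple bool.
Definition ones n (x : bits n) : nat := count id x.
Definition hamming n (x y : bits n) : nat := (\sum_(i < n) (tnth x i != tnth y i))%N.
Definition zeros_str n : bits n := [tuple false | _ < n].
Definition ones_str n : bits n := [tuple true | _ < n].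

(** Standard bit mutation: each bit flipped independently with prob. 1/n. *)
Definition mut_prob (R : realType) n (x y : bits n) : R :=
  (n%:R^-1) ^+ hamming x y * (1 - n%:R^-1) ^+ (n - hamming x y).

(** Phenotypic distance d(x,y) = | |x|_1 - |y|_1 |. *)
Definition pheno_dist n (x y : bits n) : nat :=
  ((ones x - ones y) + (ones y - ones x))%N.

(** Populations of size mu (ordered representation of the multiset). *)
Definition pop n mu := {ffun 'I_mu -> bits n}.

Definition popstar n mu (s : pop n mu) (y : bits n) : {ffun 'I_mu.+1 -> bits n} :=
  [ffun j : 'I_mu.+1 => if unlift ord_max j is Some k then s k else y].

(** The clearing procedure, literally: inner loop over j > i. *)
Fixpoint clear_inner (R : realType) (T : Type) m (dist : T -> T -> nat)
    (sigma kappa : nat) (Ps : 'I_m -> T) (xi : T) (js : seq 'I_m) (w : nat)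
    (cur : 'I_m -> R) : 'I_m -> R :=
  match js with
  | [::] => cur
  | j :: js' =>
      if (0 < cur j) && (dist xi (Ps j) < sigma)%N then
        if (w < kappa)%N then clear_inner dist sigma kappa Ps xi js' w.+1 cur
        else clear_inner dist sigma kappa Ps xi js' w
               (fun k => if k == j then 0 else cur k)
      else clear_inner dist sigma kappa Ps xi js' w cur
  end.

Fixpoint clear_outer (R : realType) (T : Type) m (dist : T -> T -> nat)
    (sigma kappa : nat) (Ps : 'I_m -> T) (Ls : seq 'I_m) (cur : 'I_m -> R)
    : 'I_m -> R :=
  match Ls with
  | [::] => cur
  | i :: Ls' =>
      clear_outer dist sigma kappa Ps Ls'
        (if 0 < cur i then clear_inner dist sigma kappa Ps (Ps i) Ls' 1 cur
         else cur)
  end.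

(** Cleared fitness; [srt] is the sorting permutation: position k of the
    sorted list holds the individual Ps (srt k). *)
Definition cleared_fitness (R : realType) (T : Type) m (fit : T -> R)
    (dist : T -> T -> nat) (sigma kappa : nat) (srt : {perm 'I_m})
    (Ps : 'I_m -> T) : 'I_m -> R :=
  clear_outer dist sigma kappa Ps [seq srt k | k <- enum 'I_m]
    (fun j => fit (Ps j)).

(** A sorting rule: for every P*, a permutation listing P* by decreasing
    fitness (tie-breaking arbitrary). *)
Definition sorts_by_fitness (R : realType) n mu (fit : bits n -> R)
    (srt : {ffun 'I_mu.+1 -> bits n} -> {perm 'I_mu.+1}) : Prop :=
  forall (Ps : {ffun 'I_mu.+1 -> bits n}) (k k' : 'I_mu.+1),
    (k < k')%N -> fit (Ps (srt Ps k')) <= fit (Ps (srt Ps k)).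

Definition replace_at n mu (s : pop n mu) (z : 'I_mu) (y : bits n) : pop n mu :=
  [ffun k => if k == z then y else s k].

Definition ea_kernel (R : realType) n mu (fit : bits n -> R)
    (dist : bits n -> bits n -> nat) (sigma kappa : nat)
    (srt : {ffun 'I_mu.+1 -> bits n} -> {perm 'I_mu.+1})
    (s s' : pop n mu) : R :=
  \sum_(i : 'I_mu) mu%:R^-1 * \sum_(y : bits n) mut_prob R (s i) y *
    (let Ps := popstar s y in
     let cf := cleared_fitness fit dist sigma kappa (srt Ps) Ps in
     let W := [set k : 'I_mu | [forall k' : 'I_mu,
                 cf (lift ord_max k) <= cf (lift ord_max k')]] in
     \sum_(z in W) #|W|%:R^-1 *
        ((if cf (lift ord_max z) <= cf ord_max then replace_at s z y else s)
           == s')%:R).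

Definition all_niches n mu (s : pop n mu) : bool :=
  [forall i : 'I_n.+1, [exists k : 'I_mu, ones (s k) == i]].

(** Sub-probability mass of being in state s at time t without having hit
    [target] at any time < t. *)
Fixpoint surv (R : realType) n mu (K : pop n mu -> pop n mu -> R)
    (target : pred (pop n mu)) (P0 : pop n mu) (t : nat) : pop n mu -> R :=
  match t with
  | 0 => fun s => (s == P0)%:R
  | t'.+1 => fun s' =>
      \sum_(s : pop n mu | ~~ target s) surv K target P0 t' s * K s s'
  end.

(** P(T > t) where T is the hitting time of [target]. *)
Definition tail_prob (R : realType) n mu (K : pop n mu -> pop n mu -> R)
    (target : pred (pop n mu)) (P0 : pop n mu) (t : nat) : R :=
  \sum_(s : pop n mu | ~~ target s) surv K target P0 t s.

(** E[T] = sum_{t >= 0} P(T > t), in the extended reals (+oo allowed). *)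
Definition expected_hitting_time (R : realType) n mu
    (K : pop n mu -> pop n mu -> R) (target : pred (pop n mu))
    (P0 : pop n mu) : \bar R :=
  (\sum_(0 <= t <oo) (tail_prob K target P0 t)%:E)%E.

(* Additive drift on the number of missing niches.  With sigma = 1 two points
   compete in clearing iff they lie in the same niche, so clearing leaves between
   1 and kappa winners in every occupied niche.  While a niche is missing, at most
   n niches are occupied and mu >= (n+1) kappa, so some member of P_t is cleared:
   the worst individual has fitness 0, the offspring replaces it, and the niche of
   the replaced individual keeps a winner.  Occupied niches are therefore never
   lost; in particular 0^n and 1^n stay.  Let m be the smallest and M the largest
   missing niche.  If 2(m-1) <= n, a point with m-1 ones has at least n/2 zeros
   and flipping exactly one of them lands in niche m; otherwise a point with M+1
   ones has at least n/2 ones, and flipping exactly one of them lands in niche M.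
   This happens with probability at least (1/mu)(n/2)(1/n)(1-1/n)^(n-1) >= 1/(8 mu),
   so the potential 8 mu (number of missing niches) drops by at least 1 in
   expectation per generation, and the expected hitting time is at most its
   initial value 8 mu (n+1) <= 16 mu n. *)

From HB Require Import structures.
From mathcomp Require Import all_boot all_order all_algebra fingroup perm.
From mathcomp Require Import boolp classical_sets reals ereal topology normedtype sequences.
From mathcomp Require Import zify ring lra.
Set Implicit Arguments.
Unset Strict Implicit.
Unset Printing Implicit Defensive.
Import Order.TTheory GRing.Theory Num.Theory.
Local Open Scope ring_scope.

Lemma prodr_if_const (R : comPzSemiRingType) (I : finType) (P : pred I) (a b : R) :
  \prod_i (if P i then a else b) = a ^+ #|P| * b ^+ (#|I| - #|P|).
Proof.
rewrite (bigID P) /= (eq_bigr (fun=> a)) => [|i ->//].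
rewrite [X in _ * X](eq_bigr (fun=> b)) => [|i /negbTE ->//].
by rewrite !prodr_const -(cardC P) addKn; congr (_ * _ ^+ _); apply: eq_card.
Qed.

Lemma sum_nat_bool (I : finType) (P : pred I) : (\sum_i (P i : nat))%N = #|P|.
Proof.
rewrite -sum1_card [RHS]big_mkcond; apply: eq_bigr => i _.
by rewrite unfold_in; case: (P i).
Qed.

Lemma bernoulli_ineq (R : realFieldType) (x : R) m :
  0 <= x <= 1 -> 1 - m%:R * x <= (1 - x) ^+ m.
Proof.
move=> /andP [x_ge0 x_le1]; elim: m => [|m IH]; first by rewrite mul0r subr0 expr0.
have pow_ge0 : 0 <= (1 - x) ^+ m by rewrite exprn_ge0 // subr_ge0.
have m_ge0 : 0 <= m%:R :> R by rewrite ler0n.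
apply: le_trans (_ : (1 - x) * (1 - m%:R * x) <= _); last first.
  by rewrite exprS ler_wpM2l // subr_ge0.
rewrite -natr1; nra.
Qed.

Lemma avg_le (R : numFieldType) (T : finType) (A : {set T}) (f : T -> R) b :
  (0 < #|A|)%N -> (forall z, z \in A -> f z <= b) -> \sum_(z in A) #|A|%:R^-1 * f z <= b.
Proof.
move=> A_gt0 f_le; apply: le_trans (_ : \sum_(z in A) #|A|%:R^-1 * b <= _).
  by apply: ler_sum => z z_A; rewrite ler_wpM2l ?invr_ge0 ?ler0n ?f_le.
by rewrite sumr_const -[_ *+ #|A|]mulr_natl mulrA mulfV ?mul1r // pnatr_eq0 -lt0n.
Qed.

Section AdditiveDrift.
Variables (R : realType) (n mu : nat) (K : pop n mu -> pop n mu -> R).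
Variables (target inv : pred (pop n mu)) (h : pop n mu -> R) (P0 : pop n mu).
Hypothesis K_ge0 : forall s s', 0 <= K s s'.
Hypothesis h_ge0 : forall s, 0 <= h s.
Hypothesis K_inv : forall s s', inv s -> ~~ target s -> K s s' != 0 -> inv s'.
Hypothesis h_drift :
  forall s, inv s -> ~~ target s -> \sum_s' K s s' * h s' <= h s - 1.
Hypothesis inv_P0 : inv P0.

Local Notation surv := (surv K target P0).
Local Notation tail_prob := (tail_prob K target P0).

Lemma surv_ge0 t s : 0 <= surv t s.
Proof.
elim: t s => [|t IH] s /=; first exact: ler0n.
by apply: sumr_ge0 => s0 _; apply: mulr_ge0.
Qed.

Lemma surv_inv t s : surv t s != 0 -> inv s.
Proof.
elim: t s => [|t IH] s /=; first by case: (eqVneq s P0) => [-> | _]; rewrite ?eqxx.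
have term_ge0 s0 : ~~ target s0 -> 0 <= surv t s0 * K s0 s.
  by move=> _; rewrite mulr_ge0 ?surv_ge0.
move=> /eqP /(psumr_neq0P term_ge0) [s0 /andP [s0_live]].
move/lt0r_neq0; rewrite mulf_eq0 negb_or => /andP [surv_s0 K_s0].
exact: K_inv (IH _ surv_s0) s0_live K_s0.
Qed.

Definition surv_potential t := \sum_(s | ~~ target s) surv t s * h s.

Lemma surv_potential_ge0 t : 0 <= surv_potential t.
Proof. by apply: sumr_ge0 => s _; rewrite mulr_ge0 ?surv_ge0. Qed.

Lemma surv_potential0_le : surv_potential 0 <= h P0.
Proof.
rewrite /surv_potential /=; have [P0_hit | P0_live] := boolP (target P0).
  by rewrite big1 // => s; case: eqP => [-> | _]; rewrite ?P0_hit ?mul0r.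
rewrite (bigD1 P0) //= eqxx mul1r big1 ?addr0 // => s /andP [_ /negbTE ->].
by rewrite mul0r.
Qed.

Lemma surv_potential_step t :
  surv_potential t.+1 + tail_prob t <= surv_potential t.
Proof.
rewrite /surv_potential /tail_prob /=.
under eq_bigr do rewrite mulr_suml.
rewrite exchange_big -big_split /=; apply: ler_sum => s s_live.
have [/eqP -> | surv_s] := boolP (surv t s == 0).
  by rewrite big1 ?add0r ?mul0r // => s' _; rewrite !mul0r.
under eq_bigr do rewrite -mulrA.
rewrite -mulr_sumr -[h s](subrK 1) mulrDr mulr1 lerD2r.
rewrite ler_wpM2l ?surv_ge0 //; apply: le_trans _ (h_drift (surv_inv surv_s) s_live).
rewrite [X in _ <= X](bigID (fun s' => ~~ target s')) /= lerDl.
by apply: sumr_ge0 => s' _; apply: mulr_ge0.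
Qed.

Lemma tail_prob_sum_le N : \sum_(0 <= t < N) tail_prob t <= h P0.
Proof.
apply: le_trans surv_potential0_le.
suff: \sum_(0 <= t < N) tail_prob t + surv_potential N <= surv_potential 0.
  by apply: le_trans; rewrite lerDl surv_potential_ge0.
elim: N => [|N IH]; first by rewrite big_nil add0r.
rewrite big_nat_recr //= -addrA; apply: le_trans IH.
by rewrite lerD2l addrC surv_potential_step.
Qed.

Lemma expected_hitting_time_le :
  (expected_hitting_time K target P0 <= (h P0)%:E)%E.
Proof.
apply: lime_le.
  apply: is_cvg_nneseries => t _ _; rewrite lee_fin.
  by apply: sumr_ge0 => s _; apply: surv_ge0.
by near=> N; rewrite sumEFin lee_fin tail_prob_sum_le.
Unshelve. all: by end_near.
Qed.

End AdditiveDrift.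

Section Clearing.
Variables (R : realType) (T : Type) (m : nat) (dist : T -> T -> nat).
Variables (sigma kappa : nat) (niche : T -> nat) (Ps : 'I_m -> T).
Hypothesis dist_lt_sigma : forall a b, (dist a b < sigma)%N = (niche a == niche b).

Local Notation clear_inner := (@clear_inner R T m dist sigma kappa Ps).
Local Notation clear_outer := (@clear_outer R T m dist sigma kappa Ps).

Lemma clear_inner_id_or0 xi js w cur k :
  clear_inner xi js w cur k = cur k \/ clear_inner xi js w cur k = 0.
Proof.
elim: js w cur => [|j js IH] w cur /=; first by left.
case: ifP => _; last exact: IH.
case: ifP => _; first exact: IH.
case: (IH w (fun k => if k == j then 0 else cur k)) => ->; last by right.
by case: eqP; [right | left].
Qed.

Lemma clear_inner_notin xi js w cur k :
  k \notin js -> clear_inner xi js w cur k = cur k.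
Proof.
elim: js w cur => [|j js IH] w cur //=; rewrite in_cons negb_or => /andP [k_ne_j k_js].
case: ifP => _; last exact: IH.
case: ifP => _; first exact: IH.
by rewrite IH // (negbTE k_ne_j).
Qed.

Lemma clear_inner_other_niche xi js w cur k :
  niche (Ps k) != niche xi -> clear_inner xi js w cur k = cur k.
Proof.
move=> k_other; elim: js w cur => [|j js IH] w cur //=.
case: ifP => [/andP [_] | _]; last exact: IH.
rewrite dist_lt_sigma => j_same; case: ifP => _; first exact: IH.
rewrite IH; case: eqP => // k_j; move: k_other j_same; rewrite k_j eq_sym.
by move/negbTE ->.
Qed.

Lemma count_clear_inner_niche xi js w cur : uniq js ->
  (count (fun k => (niche (Ps k) == niche xi) && (0 < clear_inner xi js w cur k)%R) js
    <= kappa - w)%N.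
Proof.
elim: js w cur => [|j js IH] w cur //= /andP [j_js js_uniq].
case: ifP => [/andP [cur_j] | j_kept].
  rewrite dist_lt_sigma eq_sym => /eqP j_same.
  case: ifP => w_lt; rewrite clear_inner_notin // j_same eqxx /=.
    by rewrite cur_j; have := IH w.+1 cur js_uniq; lia.
  by rewrite eqxx ltxx add0n IH.
move: j_kept; rewrite clear_inner_notin // dist_lt_sigma eq_sym andbC => ->.
by rewrite add0n IH.
Qed.

Lemma clear_outer_id_or0 Ls cur k :
  clear_outer Ls cur k = cur k \/ clear_outer Ls cur k = 0.
Proof.
elim: Ls cur => [|i Ls IH] cur /=; first by left.
case: ifP => _; last exact: IH.
case: (IH (clear_inner (Ps i) Ls 1 cur)) => ->; last by right.
exact: clear_inner_id_or0.
Qed.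

Lemma clear_outer_notin Ls cur k : k \notin Ls -> clear_outer Ls cur k = cur k.
Proof.
elim: Ls cur => [|i Ls IH] cur //=; rewrite in_cons negb_or => /andP [k_ne_i k_Ls].
by case: ifP => _; rewrite IH // clear_inner_notin.
Qed.

Lemma clear_outer_winner Ls cur k : uniq Ls -> k \in Ls -> 0 < cur k ->
  exists2 k', k' \in Ls & (niche (Ps k') == niche (Ps k)) && (0 < clear_outer Ls cur k').
Proof.
elim: Ls cur => [|i Ls IH] cur //= /andP [i_Ls Ls_uniq]; rewrite in_cons => k_Ls cur_k.
have tail_winner cur' : k \in Ls -> 0 < cur' k -> exists2 k', k' \in i :: Ls &
    (niche (Ps k') == niche (Ps k)) && (0 < clear_outer Ls cur' k').
  move=> k_tail cur'_k; have [k' k'_Ls k'_win] := IH cur' Ls_uniq k_tail cur'_k.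
  by exists k'; rewrite ?in_cons ?k'_Ls ?orbT.
case: ifP => cur_i; last first.
  apply: (tail_winner _ _ cur_k); case/predU1P: k_Ls => // k_i.
  by move: cur_i; rewrite -k_i cur_k.
have [same | other] := eqVneq (niche (Ps i)) (niche (Ps k)).
  exists i; first exact: mem_head.
  by rewrite same eqxx clear_outer_notin ?clear_inner_notin.
apply: tail_winner; first by case/predU1P: k_Ls other => // ->; rewrite eqxx.
by rewrite clear_inner_other_niche // eq_sym.
Qed.

Lemma count_clear_outer_niche Ls cur v : (0 < kappa)%N -> uniq Ls ->
  (count (fun k => (niche (Ps k) == v) && (0 < clear_outer Ls cur k)%R) Ls <= kappa)%N.
Proof.
move=> kappa_gt0; elim: Ls cur => [|i Ls IH] cur //= /andP [i_Ls Ls_uniq].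
rewrite clear_outer_notin //; case: ifP => cur_i; last by rewrite cur_i andbF IH.
rewrite clear_inner_notin // cur_i andbT.
have [<- | _] := eqVneq (niche (Ps i)) v; last by rewrite IH.
set cur' := clear_inner _ _ _ _.
have survivors_le : (count (fun k => (niche (Ps k) == niche (Ps i)) &&
    (0 < clear_outer Ls cur' k)%R) Ls <= count (fun k => (niche (Ps k) == niche (Ps i)) &&
    (0 < cur' k)%R) Ls)%N.
  apply: sub_count => k /andP [-> /=].
  by case: (clear_outer_id_or0 Ls cur' k) => ->; rewrite ?ltxx.
have := @count_clear_inner_niche (Ps i) Ls 1 cur Ls_uniq; rewrite -/cur' /=; lia.
Qed.

End Clearing.

Lemma pheno_dist_lt1 n (x y : bits n) : (pheno_dist x y < 1)%N = (ones x == ones y).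
Proof. by rewrite /pheno_dist ltnS leqn0 addn_eq0 !subn_eq0 -eqn_leq. Qed.

Section PhenotypicClearing.
Variables (R : realType) (n m kappa : nat) (fit : bits n -> R).
Variables (srt : {perm 'I_m}) (Ps : 'I_m -> bits n).
Hypothesis fit_gt0 : forall x, 0 < fit x.

Local Notation cf := (cleared_fitness fit (@pheno_dist n) 1 kappa srt Ps).
Let sorted_pop := [seq srt k | k <- enum 'I_m].

Let sorted_pop_uniq : uniq sorted_pop.
Proof. by rewrite map_inj_uniq ?enum_uniq //; exact: perm_inj. Qed.

Let mem_sorted_pop k : k \in sorted_pop.
Proof. by apply/mapP; exists (srt^-1 k)%g; rewrite ?mem_enum ?permKV. Qed.

Lemma cleared_fitness_id_or0 k : cf k = fit (Ps k) \/ cf k = 0.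
Proof. exact: clear_outer_id_or0. Qed.

Lemma cleared_fitness_ge0 k : 0 <= cf k.
Proof. by case: (cleared_fitness_id_or0 k) => ->; [apply/ltW/fit_gt0 |]. Qed.

Lemma cleared_fitness_winner k : exists2 k', ones (Ps k') = ones (Ps k) & 0 < cf k'.
Proof.
have [k' _ /andP [/eqP same win]] := clear_outer_winner kappa Ps (@pheno_dist_lt1 n)
  (cur := fun j => fit (Ps j)) sorted_pop_uniq (mem_sorted_pop k) (fit_gt0 (Ps k)).
by exists k'.
Qed.

Lemma card_niche_winners v : (0 < kappa)%N ->
  (#|[pred k | (ones (Ps k) == v) && (0 < cf k)%R]| <= kappa)%N.
Proof.
move=> kappa_gt0; have sorted_perm : perm_eq (enum 'I_m) sorted_pop.
  by apply: uniq_perm; rewrite ?enum_uniq // => k; rewrite mem_enum mem_sorted_pop.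
rewrite cardE size_filter -enumT (seq.permP sorted_perm).
exact: (count_clear_outer_niche Ps (@pheno_dist_lt1 n) _ v kappa_gt0 sorted_pop_uniq).
Qed.

End PhenotypicClearing.

Section BitStrings.
Variable n : nat.
Implicit Types x : bits n.

Lemma ones_le x : (ones x <= n)%N.
Proof. by rewrite /ones -[X in (_ <= X)%N](size_tuple x) count_size. Qed.

Lemma ones_card x : ones x = #|[set i | tnth x i]|.
Proof. by rewrite /ones -sum1_count big_tuple sum1dep_card. Qed.

Lemma ones_tnth x : ones x = (\sum_i (tnth x i : nat))%N.
Proof. by rewrite ones_card sum_nat_bool; apply: eq_card => i; rewrite inE. Qed.

Lemma card_zeros x : #|[set i | ~~ tnth x i]| = (n - ones x)%N.
Proof.
have -> : [set i | ~~ tnth x i] = ~: [set i | tnth x i] by apply/setP => i; rewrite !inE.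
by have := cardsC [set i | tnth x i]; rewrite card_ord ones_card; lia.
Qed.

Lemma ones_zeros_str : ones (zeros_str n) = 0%N.
Proof. by rewrite ones_tnth big1 // => i _; rewrite tnth_mktuple. Qed.

Lemma ones_ones_str : ones (ones_str n) = n.
Proof.
rewrite ones_tnth (eq_bigr (fun=> 1%N)) => [|i _]; last by rewrite tnth_mktuple.
by rewrite sum1_card card_ord.
Qed.

Definition flip x (j : 'I_n) : bits n :=
  [tuple if i == j then ~~ tnth x i else tnth x i | i < n].

Lemma tnth_flip x j i : tnth (flip x j) i = if i == j then ~~ tnth x i else tnth x i.
Proof. exact: tnth_mktuple. Qed.

Lemma flip_inj x : injective (flip x).
Proof.
move=> j j' flip_eq; have := congr1 (fun y => tnth y j) flip_eq; rewrite !tnth_flip eqxx.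
by case: eqP => // _; case: (tnth x j).
Qed.

Lemma hamming_flip x j : hamming x (flip x j) = 1%N.
Proof.
rewrite /hamming (bigD1 j) //= tnth_flip eqxx big1 => [|i /negbTE i_ne_j].
  by case: (tnth x j).
by rewrite tnth_flip i_ne_j eqxx.
Qed.

Lemma ones_flip x j : (ones (flip x j) + tnth x j = ones x + ~~ tnth x j)%N.
Proof.
rewrite !ones_tnth (bigD1 j) //= [in RHS](bigD1 j) //= tnth_flip eqxx.
rewrite (eq_bigr (fun i => nat_of_bool (tnth x i))) => [|i /negbTE i_ne_j]; last first.
  by rewrite tnth_flip i_ne_j.
by case: (tnth x j); rewrite /= ?addn0 ?addn1 ?add0n ?add1n ?addSn.
Qed.

End BitStrings.

Definition has_niche n mu (s : pop n mu) (v : nat) : bool := [exists k, ones (s k) == v].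

Lemma popstar_lift n mu (s : pop n mu) y k : popstar s y (lift ord_max k) = s k.
Proof. by rewrite ffunE liftK. Qed.

Lemma popstar_max n mu (s : pop n mu) y : popstar s y ord_max = y.
Proof. by rewrite ffunE unlift_none. Qed.

Lemma card_winners_le n mu (s : pop n mu) (win : pred 'I_mu) kappa :
  ~~ all_niches s ->
  (forall v, #|[pred k | (ones (s k) == v) && win k]| <= kappa)%N ->
  (#|win| <= n * kappa)%N.
Proof.
case/forallPn => v0 /existsPn v0_missing win_le.
pose niche k : 'I_n.+1 := Ordinal (ones_le (s k) : ones (s k) < n.+1)%N.
rewrite -sum1_card (partition_big niche (predC1 v0)) /=; last first.
  by move=> k _; apply: contraNneq (v0_missing k) => <-.
apply: (@leq_trans (\sum_(j < n.+1 | j != v0) kappa)).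
  apply: leq_sum => v _; apply: leq_trans (win_le v).
  by rewrite sum1dep_card; apply/eq_leq/eq_card => k; rewrite !inE andbC.
rewrite sum_nat_cond_const leq_mul2r.
have -> : [set j | j != v0] = [set~ v0] by apply/setP => j; rewrite !inE.
by rewrite cardsC1 card_ord leqnn orbT.
Qed.

Section Replacement.
Variables (R : realType) (n mu kappa : nat) (fit : bits n -> R).
Variable srt : {ffun 'I_mu.+1 -> bits n} -> {perm 'I_mu.+1}.
Hypotheses (fit_gt0 : forall x, 0 < fit x) (kappa_gt0 : (0 < kappa)%N).
Hypothesis mu_large : (n.+1 * kappa <= mu)%N.

Definition cleared_popstar (s : pop n mu) (y : bits n) :=
  cleared_fitness fit (@pheno_dist n) 1 kappa (srt (popstar s y)) (popstar s y).

Definition worst_set (s : pop n mu) (y : bits n) := [set k : 'I_mu | [forall k' : 'I_mu,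
  cleared_popstar s y (lift ord_max k) <= cleared_popstar s y (lift ord_max k')]].

Definition next_pop (s : pop n mu) (y : bits n) (z : 'I_mu) :=
  if cleared_popstar s y (lift ord_max z) <= cleared_popstar s y ord_max
  then replace_at s z y else s.

Variables (s : pop n mu) (y : bits n).
Hypothesis s_missing : ~~ all_niches s.

Lemma exists_cleared_member : exists k, cleared_popstar s y (lift ord_max k) = 0.
Proof.
apply/not_existsP => no_cleared.
have all_win k : 0 < cleared_popstar s y (lift ord_max k).
  by rewrite lt_def cleared_fitness_ge0 // andbT; apply/eqP/no_cleared.
suff : (mu <= n * kappa)%N by lia.
rewrite -[mu in (mu <= _)%N]card_ord.
apply: (@leq_trans #|[pred k : 'I_mu | 0 < cleared_popstar s y (lift ord_max k)]|).
  by apply: subset_leq_card; apply/fintype.subsetP => k _; rewrite inE all_win.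
apply: card_winners_le s_missing _ => v.
apply: leq_trans (card_niche_winners fit (srt (popstar s y)) (popstar s y) v kappa_gt0).
set W := [pred k | _ && _]; rewrite -(card_image (@lift_inj _ ord_max) W).
apply: subset_leq_card; apply/fintype.subsetP => x /fintype.imageP [k k_W ->].
by rewrite inE /= popstar_lift.
Qed.

Variable z : 'I_mu.
Hypothesis z_worst : z \in worst_set s y.

Lemma worst_cleared : cleared_popstar s y (lift ord_max z) = 0.
Proof.
have [k cleared_k] := exists_cleared_member.
move: z_worst; rewrite inE => /forallP /(_ k); rewrite cleared_k => z_le0.
by apply/eqP; rewrite eq_le z_le0 cleared_fitness_ge0.
Qed.

Lemma next_pop_replace : next_pop s y z = replace_at s z y.
Proof. by rewrite /next_pop worst_cleared cleared_fitness_ge0. Qed.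

Lemma has_niche_offspring : has_niche (next_pop s y z) (ones y).
Proof. by rewrite next_pop_replace; apply/existsP; exists z; rewrite ffunE eqxx. Qed.

Lemma has_niche_next_pop v : has_niche s v -> has_niche (next_pop s y z) v.
Proof.
case/existsP => k /eqP <-; rewrite next_pop_replace.
have [-> | k_ne_z] := eqVneq k z; last first.
  by apply/existsP; exists k; rewrite ffunE (negbTE k_ne_z).
have [k' same_niche k'_win] :=
  cleared_fitness_winner kappa (srt (popstar s y)) (popstar s y) fit_gt0 (lift ord_max z).
rewrite popstar_lift in same_niche.
case: (unliftP ord_max k') same_niche k'_win => [j -> | ->] same_niche k'_win.
  have j_ne_z : j != z.
    by apply: contraTneq k'_win => ->; rewrite -/(cleared_popstar s y _) worst_cleared ltxx.
  by apply/existsP; exists j; rewrite ffunE (negbTE j_ne_z) -(popstar_lift s y) same_niche.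
by apply/existsP; exists z; rewrite ffunE eqxx -(popstar_max s y) same_niche.
Qed.

End Replacement.

Section Mutation.
Variables (R : realType) (n : nat).
Local Notation p := (n%:R^-1 : R).

Lemma mut_rate_ge0 : 0 <= p.
Proof. by rewrite invr_ge0 ler0n. Qed.

Lemma mut_rate_le1 : p <= 1.
Proof. by case: n => [|k]; rewrite ?invr0 ?ler01 // invf_le1 ?ltr0n // ler1n. Qed.

Lemma mut_prob_ge0 (x y : bits n) : 0 <= mut_prob R x y.
Proof.
rewrite /mut_prob; apply: mulr_ge0; apply: exprn_ge0.
  exact: mut_rate_ge0.
by rewrite subr_ge0 mut_rate_le1.
Qed.

Lemma mut_prob_prod (x y : bits n) :
  mut_prob R x y = \prod_i (if tnth x i != tnth y i then p else 1 - p).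
Proof. by rewrite prodr_if_const card_ord /mut_prob /hamming sum_nat_bool. Qed.

Definition bits_of_ffun (f : {ffun 'I_n -> bool}) : bits n := [tuple f i | i < n].

Lemma bits_of_ffun_bij : bijective bits_of_ffun.
Proof.
exists (fun x : bits n => [ffun i => tnth x i]) => [f | x].
  by apply/ffunP => i; rewrite ffunE tnth_mktuple.
by apply: eq_from_tnth => i; rewrite tnth_mktuple ffunE.
Qed.

Lemma mut_prob_sum1 (x : bits n) : \sum_y mut_prob R x y = 1.
Proof.
rewrite (reindex _ (onW_bij _ bits_of_ffun_bij)) /=.
under eq_bigr do rewrite mut_prob_prod.
under eq_bigr do under eq_bigr do rewrite tnth_mktuple.
rewrite -(bigA_distr_bigA (fun i b => if tnth x i != b then p else 1 - p)) /=.
by apply: big1 => i _; rewrite big_bool; case: (tnth x i); rewrite /= ?subrK // addrC subrK.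
Qed.

Lemma mut_prob_flip (x : bits n) j : mut_prob R x (flip x j) = p * (1 - p) ^+ (n - 1).
Proof. by rewrite /mut_prob hamming_flip expr1. Qed.

Lemma mut_prob_flips_ge (x : bits n) (J : {set 'I_n}) t :
  (forall j, j \in J -> ones (flip x j) = t) ->
  #|J|%:R * (p * (1 - p) ^+ (n - 1)) <= \sum_(y | ones y == t) mut_prob R x y.
Proof.
move=> flip_J; rewrite (bigID (mem (flip x @: J))) /= -[X in X <= _]addr0.
apply: lerD; last by apply: sumr_ge0 => y _; apply: mut_prob_ge0.
rewrite (eq_bigl (mem (flip x @: J))) => [|y]; last first.
  by apply: andb_idl => /imsetP [j j_J ->]; rewrite flip_J.
rewrite big_imset => [|j j' _ _]; last exact: flip_inj.
by under eq_bigr do rewrite mut_prob_flip; rewrite sumr_const mulr_natl.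
Qed.

(* Bernoulli gives (1 - 1/n)^(n/2) >= 1/2, and n - 1 <= 2 (n/2). *)
Lemma quarter_le_no_other_flip : (0 < n)%N -> 4^-1 <= (1 - p) ^+ (n - 1).
Proof.
move=> n_gt0; have p_ge0 := mut_rate_ge0; have p_le1 := mut_rate_le1.
have half_le : 2^-1 <= (1 - p) ^+ n./2.
  apply: le_trans (bernoulli_ineq (n./2) _); last by rewrite p_ge0 p_le1.
  have : (n./2 * 2 <= n)%N by rewrite muln2 -{2}(odd_double_half n) leq_addl.
  rewrite -(ler_nat R) natrM => half_n_le.
  have : n%:R * p = 1 by rewrite mulfV // pnatr_eq0 -lt0n.
  nra.
apply: le_trans (_ : (1 - p) ^+ (n./2 * 2) <= _).
  by rewrite exprM expr2; nra.
apply: ler_wiXn2l; rewrite ?subr_ge0 ?lerBlDr ?lerDl //.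
by rewrite muln2 -{1}(odd_double_half n); case: (odd n); lia.
Qed.

Lemma eighth_le_mut_prob_flips (x : bits n) (J : {set 'I_n}) t : (0 < n)%N ->
  (n <= 2 * #|J|)%N -> (forall j, j \in J -> ones (flip x j) = t) ->
  8^-1 <= \sum_(y | ones y == t) mut_prob R x y.
Proof.
move=> n_gt0 J_large flip_J; apply: le_trans (mut_prob_flips_ge flip_J).
have q_ge := quarter_le_no_other_flip n_gt0.
have half_le : 2^-1 <= #|J|%:R * p.
  have : n%:R * p = 1 by rewrite mulfV // pnatr_eq0 -lt0n.
  have : n%:R <= 2 * #|J|%:R :> R by rewrite -natrM ler_nat.
  have := mut_rate_ge0; nra.
nra.
Qed.

End Mutation.

Lemma parent_next_to_missing_niche n mu (s : pop n mu) :
  has_niche s 0 -> has_niche s n -> ~~ all_niches s ->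
  exists i (J : {set 'I_n}) t, [/\ ~~ has_niche s t, (n <= 2 * #|J|)%N &
    forall j, j \in J -> ones (flip (s i) j) = t].
Proof.
move=> has0 hasn s_missing.
have ex_missing : exists v, (v <= n)%N && ~~ has_niche s v.
  by case/forallPn: s_missing => v v_missing; exists v; rewrite -ltnS ltn_ord.
have [m /andP [m_le m_missing] m_min] := ex_minnP ex_missing.
have m_gt0 : (0 < m)%N by case: m m_missing {m_le m_min} => //; rewrite has0.
have [low | high] := leqP (2 * m.-1) n.
  have /existsP [i /eqP ones_i] : has_niche s m.-1.
    apply: contraT => below_missing.
    by have := m_min m.-1; rewrite below_missing andbT; lia.
  exists i, [set j | ~~ tnth (s i) j], m; split => //.
    by rewrite card_zeros ones_i; lia.
  move=> j; rewrite inE => /negbTE zero_j.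
  by have := ones_flip (s i) j; rewrite zero_j; lia.
have M_le_n v : (v <= n)%N && ~~ has_niche s v -> (v <= n)%N by case/andP.
have [M /andP [M_le M_missing] M_max] := ex_maxnP ex_missing M_le_n.
have M_lt : (M < n)%N by rewrite ltn_neqAle M_le andbT; apply: contraNneq M_missing => ->.
have m_le_M : (m <= M)%N by apply: m_min; rewrite M_le M_missing.
have /existsP [i /eqP ones_i] : has_niche s M.+1.
  apply: contraT => above_missing.
  by have := M_max M.+1; rewrite above_missing andbT; lia.
exists i, [set j | tnth (s i) j], M; split => //.
  by rewrite -ones_card ones_i; lia.
by move=> j; rewrite inE => one_j; have := ones_flip (s i) j; rewrite one_j; lia.
Qed.

Lemma exists_discovering_parent (R : realType) n mu (s : pop n mu) : (0 < n)%N ->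
  has_niche s 0 -> has_niche s n -> ~~ all_niches s ->
  exists i, 8^-1 <= \sum_(y | ~~ has_niche s (ones y)) mut_prob R (s i) y.
Proof.
move=> n_gt0 has0 hasn s_missing.
have [i [J [t [t_missing J_large flip_J]]]] :=
  parent_next_to_missing_niche has0 hasn s_missing.
exists i; apply: le_trans (eighth_le_mut_prob_flips R n_gt0 J_large flip_J) _.
have -> : \sum_(y | ones y == t) mut_prob R (s i) y =
    \sum_(y | ~~ has_niche s (ones y) && (ones y == t)) mut_prob R (s i) y.
  by apply: eq_bigl => y; case: eqP => [-> | _]; rewrite ?t_missing ?andbF.
rewrite [X in _ <= X](bigID (fun y => ones y == t)) /= lerDl.
by apply: sumr_ge0 => y _; apply: mut_prob_ge0.
Qed.

Definition missing_niches n mu (s : pop n mu) : {set 'I_n.+1} :=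
  [set v : 'I_n.+1 | ~~ has_niche s v].

Definition niche_potential (R : realType) n mu (s : pop n mu) : R :=
  (8 * mu * #|missing_niches s|)%:R.

Section NicheDrift.
Variables (R : realType) (n mu kappa : nat) (fit : bits n -> R).
Variable srt : {ffun 'I_mu.+1 -> bits n} -> {perm 'I_mu.+1}.
Hypotheses (fit_gt0 : forall x, 0 < fit x) (kappa_gt0 : (0 < kappa)%N).
Hypothesis mu_large : (n.+1 * kappa <= mu)%N.

Local Notation K := (ea_kernel fit (@pheno_dist n) 1 kappa srt).
Local Notation worst_set := (worst_set kappa fit srt).
Local Notation next_pop := (next_pop kappa fit srt).

Lemma ea_kernelE s s' : K s s' = \sum_i mu%:R^-1 * \sum_y mut_prob R (s i) y *
  \sum_(z in worst_set s y) #|worst_set s y|%:R^-1 * (next_pop s y z == s')%:R.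
Proof. by []. Qed.

Lemma ea_kernel_expectation (f : pop n mu -> R) s :
  \sum_s' K s s' * f s' = \sum_i mu%:R^-1 * \sum_y mut_prob R (s i) y *
    \sum_(z in worst_set s y) #|worst_set s y|%:R^-1 * f (next_pop s y z).
Proof.
under eq_bigr do rewrite ea_kernelE mulr_suml.
rewrite exchange_big /=; apply: eq_bigr => i _.
under eq_bigr do rewrite -mulrA mulr_suml.
rewrite -mulr_sumr exchange_big /=; congr (_ * _); apply: eq_bigr => y _.
under eq_bigr do rewrite -mulrA mulr_suml.
rewrite -mulr_sumr exchange_big /=; congr (_ * _); apply: eq_bigr => z _.
under eq_bigr do rewrite -mulrA.
rewrite -mulr_sumr; congr (_ * _).
rewrite (bigD1 (next_pop s y z)) //= eqxx mul1r big1 ?addr0 // => s' /negbTE.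
by rewrite eq_sym => ->; rewrite mul0r.
Qed.

Lemma ea_kernel_ge0 s s' : 0 <= K s s'.
Proof.
rewrite ea_kernelE; apply: sumr_ge0 => i _; rewrite mulr_ge0 ?invr_ge0 ?ler0n //.
apply: sumr_ge0 => y _; rewrite mulr_ge0 ?mut_prob_ge0 //.
by apply: sumr_ge0 => z _; rewrite mulr_ge0 ?invr_ge0 ?ler0n.
Qed.

Lemma ea_kernel_support s s' : K s s' != 0 ->
  exists y, exists2 z, z \in worst_set s y & next_pop s y z = s'.
Proof.
apply: contra_neqP => no_move; rewrite ea_kernelE big1 // => i _.
rewrite big1 ?mulr0 // => y _; rewrite big1 ?mulr0 // => z z_worst.
by case: eqP => [next_eq | _]; [case: no_move; exists y, z | rewrite mulr0].
Qed.

Let mu_gt0 : (0 < mu)%N.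
Proof. by apply: leq_trans mu_large; rewrite muln_gt0. Qed.

Lemma worst_set_gt0 s y : (0 < #|worst_set s y|)%N.
Proof.
pose worst k := cleared_popstar kappa fit srt s y (lift ord_max k).
have [k _ k_min] := arg_minP worst (erefl : predT (Ordinal mu_gt0)).
by apply/card_gt0P; exists k; rewrite inE; apply/forallP => k'; apply: k_min.
Qed.

Lemma card_missing_next_pop s y z : ~~ all_niches s -> z \in worst_set s y ->
  (#|missing_niches (next_pop s y z)| + ~~ has_niche s (ones y) <= #|missing_niches s|)%N.
Proof.
move=> s_missing z_worst.
have next_sub : missing_niches (next_pop s y z) \subset missing_niches s.
  apply/fintype.subsetP => v; rewrite !inE; apply: contra.
  exact: (has_niche_next_pop fit_gt0 kappa_gt0 mu_large s_missing z_worst (v := v)).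
have [_ | y_new] := boolP (has_niche s (ones y)); first by rewrite addn0 subset_leq_card.
rewrite addn1; apply: proper_card; rewrite properE next_sub /=.
apply/fintype.subsetPn; exists (inord (ones y)); rewrite !inE inordK ?ltnS ?ones_le //.
by rewrite negbK (has_niche_offspring fit_gt0 kappa_gt0 mu_large s_missing z_worst).
Qed.

Lemma expected_potential_from_parent s i : ~~ all_niches s ->
  \sum_y mut_prob R (s i) y * \sum_(z in worst_set s y)
      #|worst_set s y|%:R^-1 * niche_potential R (next_pop s y z)
    <= niche_potential R s -
       (8 * mu)%:R * \sum_(y | ~~ has_niche s (ones y)) mut_prob R (s i) y.
Proof.
move=> s_missing; set h := niche_potential R s; set c : R := (8 * mu)%:R.
pose new (y : bits n) : R := (~~ has_niche s (ones y))%:R.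
have next_le y z :
    z \in worst_set s y -> niche_potential R (next_pop s y z) <= h - c * new y.
  move=> z_worst; rewrite lerBrDr /niche_potential /c /new -!natrM -natrD ler_nat.
  by rewrite -mulnDr leq_mul2l card_missing_next_pop ?orbT.
have -> : h - c * \sum_(y | ~~ has_niche s (ones y)) mut_prob R (s i) y =
    \sum_y mut_prob R (s i) y * (h - c * new y).
  apply/esym; under eq_bigr do rewrite mulrBr mulrCA.
  rewrite sumrB -mulr_suml mut_prob_sum1 mul1r -mulr_sumr [in RHS]big_mkcond.
  congr (_ - c * _); apply: eq_bigr => y _.
  by rewrite /new; case: has_niche; rewrite ?mulr1 ?mulr0.
apply: ler_sum => y _; rewrite ler_wpM2l ?mut_prob_ge0 // avg_le ?worst_set_gt0 //.
exact: next_le.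
Qed.

Lemma niche_potential_drift s : (0 < n)%N ->
  has_niche s 0 -> has_niche s n -> ~~ all_niches s ->
  \sum_s' K s s' * niche_potential R s' <= niche_potential R s - 1.
Proof.
move=> n_gt0 has0 hasn s_missing; set h := niche_potential R s.
pose discovery i := \sum_(y | ~~ has_niche s (ones y)) mut_prob R (s i) y.
have [i0 discovery_i0] := exists_discovering_parent R n_gt0 has0 hasn s_missing.
have discovery_ge : 8^-1 <= \sum_i discovery i.
  rewrite (bigD1 i0) //= -[X in X <= _]addr0 lerD // sumr_ge0 // => i _.
  by apply: sumr_ge0 => y _; apply: mut_prob_ge0.
rewrite ea_kernel_expectation.
apply: le_trans (_ : \sum_i mu%:R^-1 * (h - (8 * mu)%:R * discovery i) <= _).
  apply: ler_sum => i _; rewrite ler_wpM2l ?invr_ge0 ?ler0n //.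
  exact: expected_potential_from_parent.
rewrite -mulr_sumr sumrB sumr_const card_ord -mulr_sumr -[h *+ mu]mulr_natr natrM.
have -> : mu%:R^-1 * (h * mu%:R - 8%:R * mu%:R * \sum_i discovery i) =
    h - 8 * \sum_i discovery i :> R.
  by field; rewrite pnatr_eq0 -lt0n mu_gt0.
by nra.
Qed.

End NicheDrift.

Theorem lemma3 (R : realType) :
  exists (C : R) (n0 : nat),
  forall (n : nat) (u : nat -> R) (kappa mu : nat)
         (srt : {ffun 'I_mu.+1 -> bits n} -> {perm 'I_mu.+1})
         (P0 : pop n mu),
    (n0 <= n)%N ->
    (forall i, (i <= n)%N -> 0 < u i) ->
    (1 <= kappa)%N ->
    (n.+1 * kappa <= mu)%N ->
    sorts_by_fitness (fun x => u (ones x)) srt ->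
    (exists k, P0 k = zeros_str n) ->
    (exists k, P0 k = ones_str n) ->
    (expected_hitting_time
       (ea_kernel (fun x => u (ones x)) (@pheno_dist n) 1 kappa srt)
       (@all_niches n mu) P0
     <= (C * mu%:R * n%:R)%:E)%E.
Proof.
(* The argument works for every sorting permutation. *)
exists 16, 1%N => n u kappa mu srt P0 n_gt0 u_gt0 kappa_gt0 mu_large _.
move=> [k0 P0_k0] [k1 P0_k1].
have fit_gt0 (x : bits n) : 0 < u (ones x) by apply/u_gt0/ones_le.
pose extremes (s : pop n mu) := has_niche s 0 && has_niche s n.
apply: le_trans (expected_hitting_time_le (inv := extremes)
  (h := @niche_potential R n mu) _ _ _ _ _) _.
- exact: ea_kernel_ge0.
- by move=> s; rewrite ler0n.
- move=> s s' /andP [has0 hasn] s_missing /ea_kernel_support [y [z z_worst <-]].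
  by rewrite /extremes !(has_niche_next_pop fit_gt0 kappa_gt0 mu_large s_missing z_worst).
- by move=> s /andP [has0 hasn]; apply: niche_potential_drift.
- by apply/andP; split; apply/existsP; [exists k0 | exists k1];
    rewrite ?P0_k0 ?P0_k1 ?ones_zeros_str ?ones_ones_str.
rewrite lee_fin /niche_potential -[16]/(16%:R) -!natrM ler_nat.
have := max_card (missing_niches P0); rewrite card_ord; nia.
Qed.
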